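(* Let $\frac12<s<1$, $M\in\mathbb R\setminus\{0\}$ and $c>0$. Then for all $n,m\in\mathbb Z^*$ and $k\in\{2,3\}$, $$|\lambda_n^1-\lambda_m^k|\ge\frac{3|M|}{\frac{2M^2}{\rho_1}+2}>0,$$ and for all $n,m\in\mathbb Z^*$ with $n\neq m$, $$|\lambda_n^1-\lambda_m^1|\ge c\left|\mathrm{sgn}(n)\rho_{|n|}^{1/(2s)}-\mathrm{sgn}(m)\rho_{|m|}^{1/(2s)}\right|>0.$$
   Context: $(-d_x^2)^s$ denotes the fractional Laplacian; $0<\rho_1\le\rho_2\le\cdots\to\infty$ are the eigenvalues (with multiplicity) of its realization on $L^2(-1,1)$ with zero exterior Dirichlet condition. Standing fact used: for $\frac12<s<1$ these eigenvalues are simple. Fix $M\in\mathbb R\setminus\{0\}$. For $n\ge1$, $\mu_n^1$ is the unique real root of $\mu^3+\rho_n\mu-M\rho_n=0$ (it lies strictly between $0$ and $M$), $\mu_n^2=-\frac{\mu_n^1}{2}+i\sqrt{3(\mu_n^1/2)^2+\rho_n}$ and $\mu_n^3=\overline{\mu_n^2}$. For $c\in\mathbb R$, $\mathbb Z^*=\mathbb Z\setminus\{0\}$, $S=\{(n,j):n\in\mathbb Z^*,\ j\in\{1,2,3\}\}$ and $\lambda_n^j=\mu_{|n|}^j+i\,\mathrm{sgn}(n)\,c\,\rho_{|n|}^{1/(2s)}$ for $(n,j)\in S$. *)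

From Stdlib Require Import Reals Lra Lia ZArith.
Open Scope R_scope.

Definition C := (R * R)%type.
Definition Cmod (z : C) : R := sqrt (fst z ^ 2 + snd z ^ 2).
Definition Cdist (z w : C) : R := Cmod (fst z - fst w, snd z - snd w).

(* mu_n^j for j = 1,2,3, given mu_n^1 = m1 and rho_n = r *)
Definition mu (r m1 : R) (j : nat) : C :=
  match j with
  | 1%nat => (m1, 0)
  | 2%nat => (- m1 / 2, sqrt (3 * (m1 / 2) ^ 2 + r))
  | _ => (- m1 / 2, - sqrt (3 * (m1 / 2) ^ 2 + r))
  end.

Definition lambda (s c : R) (rho mu1 : nat -> R) (n : Z) (j : nat) : C :=
  let a := Z.abs_nat n in
  let z := mu (rho a) (mu1 a) j in
  (fst z, snd z + IZR (Z.sgn n) * c * Rpower (rho a) (1 / (2 * s))).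

From Stdlib Require Import Reals ZArith Lra Lia Psatz.
Open Scope R_scope.

(* Both distances are bounded below by a single coordinate of the difference:
   the real part for |lambda_n^1 - lambda_m^k| (k = 2, 3), the imaginary part
   for |lambda_n^1 - lambda_m^1|.

   - For the real part, we show that the real root mu of
     mu^3 + r mu - M r = 0 (with r >= rho_1 > 0) has the sign of M and
     satisfies |mu| >= |M| / (M^2/rho_1 + 1).  Since Re lambda_n^1 = mu_|n|^1
     and Re lambda_m^k = -mu_|m|^1 / 2 have opposite signs, the real parts are
     at distance at least (3/2) |M| / (M^2/rho_1 + 1).
   - For the imaginary part, the difference is c times
     sgn(n) rho_|n|^(1/(2s)) - sgn(m) rho_|m|^(1/(2s)); this is nonzero for
     n <> m because n |-> sgn(n) f(|n|) is injective on Z \ {0} whenever f is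
     positive and strictly increasing, as rho^(1/(2s)) is. *)

Lemma Rabs_fst_le_Cmod (z : R * R) : Rabs (fst z) <= Cmod z.
Proof.
  unfold Cmod. rewrite <- (sqrt_pow2 (Rabs (fst z))) by apply Rabs_pos.
  apply sqrt_le_1_alt. rewrite pow2_abs.
  pose proof (pow2_ge_0 (snd z)). lra.
Qed.

Lemma Rabs_snd_le_Cmod (z : R * R) : Rabs (snd z) <= Cmod z.
Proof.
  unfold Cmod. rewrite <- (sqrt_pow2 (Rabs (snd z))) by apply Rabs_pos.
  apply sqrt_le_1_alt. rewrite pow2_abs.
  pose proof (pow2_ge_0 (fst z)). lra.
Qed.

Lemma Rabs_re_le_Cdist (z w : R * R) : Rabs (fst z - fst w) <= Cdist z w.
Proof. exact (Rabs_fst_le_Cmod (fst z - fst w, snd z - snd w)). Qed.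

Lemma Rabs_im_le_Cdist (z w : R * R) : Rabs (snd z - snd w) <= Cdist z w.
Proof. exact (Rabs_snd_le_Cmod (fst z - fst w, snd z - snd w)). Qed.

Lemma strictly_increasing_from_succ (f : nat -> R)
  (Hsucc : forall n, (1 <= n)%nat -> f n < f (S n)) :
  forall a b, (1 <= a)%nat -> (a < b)%nat -> f a < f b.
Proof.
  intros a b Ha Hab. induction b as [|b IH]; [lia|].
  destruct (Nat.eq_dec a b) as [->|Hne]; [now apply Hsucc|].
  specialize (IH ltac:(lia)). specialize (Hsucc b ltac:(lia)). lra.
Qed.

Lemma cubic_root_lower_bound_pos (M mu r r1 : R)
  (HM : 0 < M) (Hr1 : 0 < r1) (Hr : r1 <= r)
  (Hroot : mu ^ 3 + r * mu - M * r = 0) :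
  0 < mu /\ M <= mu * (M ^ 2 / r1 + 1).
Proof.
  assert (Hfact : mu * (mu ^ 2 + r) = M * r) by nra.
  assert (Hpos : 0 < mu).
  { destruct (Rle_or_lt mu 0) as [h|h]; [|exact h].
    assert (0 < mu ^ 2 + r) by nra. nra. }
  assert (Hlt : mu < M).
  { destruct (Rle_or_lt M mu) as [h|h]; [|exact h].
    assert (M * (mu ^ 2 + r) <= mu * (mu ^ 2 + r)) by (apply Rmult_le_compat_r; nra).
    assert (0 < M * mu ^ 2) by (apply Rmult_lt_0_compat; nra). nra. }
  assert (Hsq : mu ^ 2 < M ^ 2) by nra.
  assert (Hlin : M * r < mu * (M ^ 2 + r)) by nra.
  assert (Hdiv : M < mu * (M ^ 2 / r + 1)).
  { replace (mu * (M ^ 2 / r + 1)) with (mu * (M ^ 2 + r) / r) by (field; lra).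
    apply Rmult_lt_reg_r with r; [lra|].
    unfold Rdiv. rewrite Rmult_assoc, Rinv_l by lra. lra. }
  assert (Hr1r : M ^ 2 / r <= M ^ 2 / r1).
  { unfold Rdiv. apply Rmult_le_compat_l; [nra|]. apply Rinv_le_contravar; lra. }
  split; [exact Hpos|]. nra.
Qed.

Lemma cubic_root_lower_bound (M mu r r1 : R)
  (HM : M <> 0) (Hr1 : 0 < r1) (Hr : r1 <= r)
  (Hroot : mu ^ 3 + r * mu - M * r = 0) :
  0 < M * mu /\ Rabs M / (M ^ 2 / r1 + 1) <= Rabs mu.
Proof.
  assert (HD : 0 < M ^ 2 / r1 + 1).
  { assert (0 <= M ^ 2 / r1) by (apply Rmult_le_pos; [nra | left; apply Rinv_0_lt_compat; lra]). lra. }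
  destruct (Rlt_or_le 0 M) as [Hpos|Hneg].
  - destruct (cubic_root_lower_bound_pos M mu r r1 Hpos Hr1 Hr Hroot) as [Hmu Hb].
    split; [nra|]. rewrite !Rabs_right by lra.
    apply Rmult_le_reg_r with (M ^ 2 / r1 + 1); [exact HD|].
    unfold Rdiv. rewrite Rmult_assoc, Rinv_l by lra. lra.
  - assert (Hroot' : (- mu) ^ 3 + r * (- mu) - (- M) * r = 0) by nra.
    destruct (cubic_root_lower_bound_pos (- M) (- mu) r r1 ltac:(lra) Hr1 Hr Hroot')
      as [Hmu Hb].
    replace ((- M) ^ 2) with (M ^ 2) in Hb by ring.
    split; [nra|]. rewrite !Rabs_left by lra.
    apply Rmult_le_reg_r with (M ^ 2 / r1 + 1); [exact HD|].
    unfold Rdiv. rewrite Rmult_assoc, Rinv_l by lra. lra.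
Qed.

Lemma Rabs_plus_same_sign (M x y : R) :
  0 < M * x -> 0 < M * y -> Rabs (x + y) = Rabs x + Rabs y.
Proof.
  intros Hx Hy. destruct (Rlt_or_le 0 M).
  - rewrite !Rabs_right; nra.
  - rewrite !Rabs_left; nra.
Qed.

Lemma signed_values_injective (f : nat -> R)
  (Hf_pos : forall n, (1 <= n)%nat -> 0 < f n)
  (Hf_incr : forall a b, (1 <= a)%nat -> (a < b)%nat -> f a < f b)
  (n m : Z) : n <> 0%Z -> m <> 0%Z -> n <> m ->
  IZR (Z.sgn n) * f (Z.abs_nat n) <> IZR (Z.sgn m) * f (Z.abs_nat m).
Proof.
  intros Hn Hm Hnm.
  assert (Hf_inj : forall a b, (1 <= a)%nat -> (1 <= b)%nat -> a <> b -> f a <> f b).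
  { intros a b Ha Hb Hab.
    destruct (Nat.lt_gt_cases a b) as [[h|h] _]; [exact Hab| |].
    - apply Rlt_not_eq, Hf_incr; assumption.
    - apply Rgt_not_eq, Hf_incr; assumption. }
  pose proof (Hf_pos (Z.abs_nat n) ltac:(lia)).
  pose proof (Hf_pos (Z.abs_nat m) ltac:(lia)).
  destruct n as [|p|p]; [lia| |]; destruct m as [|q|q]; try lia; simpl Z.sgn;
    simpl IZR; try lra.
  - pose proof (Hf_inj (Z.abs_nat (Z.pos p)) (Z.abs_nat (Z.pos q))
                  ltac:(lia) ltac:(lia) ltac:(lia)). lra.
  - pose proof (Hf_inj (Z.abs_nat (Z.neg p)) (Z.abs_nat (Z.neg q))
                  ltac:(lia) ltac:(lia) ltac:(lia)). lra.
Qed.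

Section EigenvalueGaps.

Variables (s M c : R) (rho mu1 : nat -> R).
Hypothesis Hs : 1 / 2 < s < 1.
Hypothesis HM : M <> 0.
Hypothesis Hc : 0 < c.
Hypothesis Hrho_pos : forall n, (1 <= n)%nat -> 0 < rho n.
Hypothesis Hrho_simple : forall n, (1 <= n)%nat -> rho n < rho (S n).
Hypothesis Hmu1 : forall n, (1 <= n)%nat -> mu1 n ^ 3 + rho n * mu1 n - M * rho n = 0.

Definition gap13 : R := 3 * Rabs M / (2 * M ^ 2 / rho 1%nat + 2).

Definition signed_offset (n : Z) : R :=
  IZR (Z.sgn n) * Rpower (rho (Z.abs_nat n)) (1 / (2 * s)).

Lemma rho_increasing : forall a b, (1 <= a)%nat -> (a < b)%nat -> rho a < rho b.
Proof. exact (strictly_increasing_from_succ rho Hrho_simple). Qed.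

Lemma mu1_bound (n : nat) : (1 <= n)%nat ->
  0 < M * mu1 n /\ Rabs M / (M ^ 2 / rho 1%nat + 1) <= Rabs (mu1 n).
Proof.
  intro Hn. apply (cubic_root_lower_bound M (mu1 n) (rho n) (rho 1%nat)); auto.
  destruct (Nat.eq_dec n 1) as [->|Hne]; [lra|].
  left. apply rho_increasing; lia.
Qed.

Lemma M2_over_rho1_nonneg : 0 <= M ^ 2 / rho 1%nat.
Proof.
  assert (0 < rho 1%nat) by (apply Hrho_pos; lia).
  apply Rmult_le_pos; [nra | left; apply Rinv_0_lt_compat; lra].
Qed.

Lemma gap13_eq : gap13 = 3 / 2 * (Rabs M / (M ^ 2 / rho 1%nat + 1)).
Proof.
  pose proof M2_over_rho1_nonneg.
  assert (0 < rho 1%nat) by (apply Hrho_pos; lia).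
  unfold gap13. field; repeat split; nra.
Qed.

Lemma gap13_pos : gap13 > 0.
Proof.
  rewrite gap13_eq.
  pose proof M2_over_rho1_nonneg. pose proof (Rabs_pos_lt M HM).
  assert (0 < Rabs M / (M ^ 2 / rho 1%nat + 1)) by (apply Rdiv_lt_0_compat; lra).
  lra.
Qed.

(* First estimate: the real parts of lambda_n^1 and lambda_m^k (k = 2, 3)
   are mu_|n|^1 and -mu_|m|^1/2, which lie on opposite sides of 0. *)
Lemma gap_1_23 (n m : Z) (k : nat) :
  n <> 0%Z -> m <> 0%Z -> (k = 2%nat \/ k = 3%nat) ->
  Cdist (lambda s c rho mu1 n 1) (lambda s c rho mu1 m k) >= gap13.
Proof.
  intros Hn Hm Hk.
  destruct (mu1_bound (Z.abs_nat n) ltac:(lia)) as [Sn Bn].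
  destruct (mu1_bound (Z.abs_nat m) ltac:(lia)) as [Sm Bm].
  assert (Hre : gap13 <= Rabs (mu1 (Z.abs_nat n) - - mu1 (Z.abs_nat m) / 2)).
  { rewrite gap13_eq.
    replace (mu1 (Z.abs_nat n) - - mu1 (Z.abs_nat m) / 2)
      with (mu1 (Z.abs_nat n) + mu1 (Z.abs_nat m) / 2) by field.
    rewrite (Rabs_plus_same_sign M) by (unfold Rdiv; nra).
    unfold Rdiv. rewrite Rabs_mult, Rabs_inv, (Rabs_right 2) by lra. lra. }
  destruct Hk as [-> | ->];
    match goal with |- Cdist ?z ?w >= _ => pose proof (Rabs_re_le_Cdist z w) end;
    simpl in *; lra.
Qed.

Lemma signed_offset_injective (n m : Z) :
  n <> 0%Z -> m <> 0%Z -> n <> m -> signed_offset n <> signed_offset m.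
Proof.
  assert (Hal : 0 < 1 / (2 * s)) by (apply Rdiv_lt_0_compat; lra).
  apply (signed_values_injective (fun k => Rpower (rho k) (1 / (2 * s)))).
  - intros k _. apply exp_pos.
  - intros a b Ha Hab. apply Rlt_Rpower_l; [exact Hal|].
    split; [now apply Hrho_pos | now apply rho_increasing].
Qed.

(* Second estimate: the imaginary part of lambda_n^1 - lambda_m^1 is
   c (signed_offset n - signed_offset m). *)
Lemma gap_1_1 (n m : Z) :
  Cdist (lambda s c rho mu1 n 1) (lambda s c rho mu1 m 1)
    >= c * Rabs (signed_offset n - signed_offset m).
Proof.
  pose proof (Rabs_im_le_Cdist (lambda s c rho mu1 n 1) (lambda s c rho mu1 m 1))
    as Him.
  unfold signed_offset. simpl snd in Him.
  replace (0 + IZR (Z.sgn n) * c * Rpower (rho (Z.abs_nat n)) (1 / (2 * s)) -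
           (0 + IZR (Z.sgn m) * c * Rpower (rho (Z.abs_nat m)) (1 / (2 * s))))
    with (c * (IZR (Z.sgn n) * Rpower (rho (Z.abs_nat n)) (1 / (2 * s)) -
               IZR (Z.sgn m) * Rpower (rho (Z.abs_nat m)) (1 / (2 * s))))
    in Him by ring.
  rewrite Rabs_mult, (Rabs_right c) in Him by lra. lra.
Qed.

End EigenvalueGaps.

Theorem lemma3p7 (s M c : R) (rho mu1 : nat -> R)
  (Hs : 1 / 2 < s < 1) (HM : M <> 0) (Hc : 0 < c)
  (Hrho_pos : forall n, (1 <= n)%nat -> 0 < rho n)
  (Hrho_simple : forall n, (1 <= n)%nat -> rho n < rho (S n))
  (Hrho_inf : forall A, exists N, forall n, (N <= n)%nat -> A < rho n)
  (Hmu1 : forall n, (1 <= n)%nat ->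
     mu1 n ^ 3 + rho n * mu1 n - M * rho n = 0) :
  (forall (n m : Z) (k : nat), n <> 0%Z -> m <> 0%Z -> (k = 2%nat \/ k = 3%nat) ->
     Cdist (lambda s c rho mu1 n 1) (lambda s c rho mu1 m k)
       >= 3 * Rabs M / (2 * M ^ 2 / rho 1%nat + 2)
     /\ 3 * Rabs M / (2 * M ^ 2 / rho 1%nat + 2) > 0)
  /\
  (forall n m : Z, n <> 0%Z -> m <> 0%Z -> n <> m ->
     Cdist (lambda s c rho mu1 n 1) (lambda s c rho mu1 m 1)
       >= c * Rabs (IZR (Z.sgn n) * Rpower (rho (Z.abs_nat n)) (1 / (2 * s))
                    - IZR (Z.sgn m) * Rpower (rho (Z.abs_nat m)) (1 / (2 * s)))
     /\ c * Rabs (IZR (Z.sgn n) * Rpower (rho (Z.abs_nat n)) (1 / (2 * s))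
                    - IZR (Z.sgn m) * Rpower (rho (Z.abs_nat m)) (1 / (2 * s))) > 0).
Proof.
  split.
  - intros n m k Hn Hm Hk. split.
    + exact (gap_1_23 s M c rho mu1 HM Hrho_pos Hrho_simple Hmu1 n m k Hn Hm Hk).
    + exact (gap13_pos M rho HM Hrho_pos).
  - intros n m Hn Hm Hnm. split.
    + exact (gap_1_1 s c rho mu1 Hc n m).
    + apply Rmult_gt_0_compat; [exact Hc|]. apply Rabs_pos_lt, Rminus_eq_contra.
      exact (signed_offset_injective s rho Hs Hrho_pos Hrho_simple n m Hn Hm Hnm).
Qed.
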